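(* Let $012345$ be a convex hexagon with area $A$. For $i=0,\dots,5$ (indices mod $6$), let $(i)$ denote the area of the vertex triangle with vertices $i-1,i,i+1$, and let $p$ be the area of the triangle $013$. Then $$\begin{aligned} &[p-(1)]A^2\\ &+\big[(1)(4)+2(1)(2)+(1)(5)-p^2+(1)p+(0)(1)-(2)p-(3)p-(5)p-(4)p-(0)(2)-(0)p\big]A\\ &-(1)(2)(5)-(1)(2)p-(1)(2)(4)-(1)(4)(5)-(1)(2)^2+(2)(3)p+(3)p^2-(0)(1)(5)\\ &+(0)(2)^2+(4)(5)p-(0)(1)(2)+(0)(2)(5)+(0)p^2-(0)(1)p+2(0)(2)p+(0)(5)p+(3)(4)p=0. \end{aligned}$$
   Context: The vertices of the hexagon are labelled $0,\dots,5$ in cyclic order. *)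

From mathcomp Require Import all_boot all_order all_algebra.
Set Implicit Arguments. Unset Strict Implicit. Unset Printing Implicit Defensive.
Import Order.TTheory GRing.Theory Num.Theory.
Local Open Scope ring_scope.

Section Hex.
Variable R : realFieldType.
Notation pt := (R * R)%type.

(* twice the signed area of triangle a b c (positive iff counterclockwise) *)
Definition orient (a b c : pt) : R :=
  (b.1 - a.1) * (c.2 - a.2) - (b.2 - a.2) * (c.1 - a.1).

Definition tri_area (a b c : pt) : R := `|orient a b c| / 2.

Definition hv (P : 'I_6 -> pt) (k : nat) : pt := P (inord (k %% 6)).

(* strictly convex hexagon whose vertices P 0, ..., P 5 are in cyclic order
   (either orientation): every other vertex lies strictly on the same side
   of the line through each edge. *)
Definition convex_hexagon (P : 'I_6 -> pt) : Prop :=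
  (forall i j : nat, (i < 6)%N -> (j < 6)%N -> j != i -> j != (i.+1 %% 6)%N ->
     0 < orient (hv P i) (hv P i.+1) (hv P j)) \/
  (forall i j : nat, (i < 6)%N -> (j < 6)%N -> j != i -> j != (i.+1 %% 6)%N ->
     orient (hv P i) (hv P i.+1) (hv P j) < 0).

(* area of the hexagon (shoelace formula) *)
Definition hex_area (P : 'I_6 -> pt) : R :=
  `|\sum_(i < 6) ((hv P i).1 * (hv P i.+1).2 - (hv P i.+1).1 * (hv P i).2)| / 2.

Definition vtri (P : 'I_6 -> pt) (i : nat) : R :=
  tri_area (hv P (i + 5)) (hv P i) (hv P i.+1).

End Hex.

(* Replacing each area by its signed double area [orient], the relation becomes a
   polynomial identity in the vertex coordinates, homogeneous of degree 3.
   Convexity gives all the triangles involved, and those of the fan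
   triangulation from vertex 0, one common orientation s = 1 or s = -1, so
   every area is s/2 times its signed counterpart; by homogeneity the factor
   (s/2)^3 comes out of the relation. *)

From mathcomp Require Import all_boot all_order all_algebra ring.
Import Order.TTheory GRing.Theory Num.Theory.
Local Open Scope ring_scope.

Definition hexagon_poly {R : comNzRingType} (v0 v1 v2 v3 v4 v5 p A : R) : R :=
  (p - v1) * A ^+ 2
  + (v1 * v4 + 2 * v1 * v2 + v1 * v5 - p ^+ 2 + v1 * p
     + v0 * v1 - v2 * p - v3 * p - v5 * p - v4 * p
     - v0 * v2 - v0 * p) * A
  - v1 * v2 * v5 - v1 * v2 * p - v1 * v2 * v4
  - v1 * v4 * v5 - v1 * v2 ^+ 2 + v2 * v3 * p
  + v3 * p ^+ 2 - v0 * v1 * v5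
  + v0 * v2 ^+ 2 + v4 * v5 * p - v0 * v1 * v2
  + v0 * v2 * v5 + v0 * p ^+ 2 - v0 * v1 * p
  + 2 * v0 * v2 * p + v0 * v5 * p + v3 * v4 * p.

Lemma hexagon_polyZ (R : comNzRingType) (c v0 v1 v2 v3 v4 v5 p A : R) :
  hexagon_poly (c * v0) (c * v1) (c * v2) (c * v3) (c * v4) (c * v5) (c * p) (c * A)
  = c ^+ 3 * hexagon_poly v0 v1 v2 v3 v4 v5 p A.
Proof. by rewrite /hexagon_poly; ring. Qed.

Section Hexagon.
Context {R : realFieldType}.
Implicit Type P : 'I_6 -> R * R.

Lemma hexagon_poly_orient (a0 a1 a2 a3 a4 a5 : R * R) :
  hexagon_poly (orient a5 a0 a1) (orient a0 a1 a2) (orient a1 a2 a3)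
    (orient a2 a3 a4) (orient a3 a4 a5) (orient a4 a5 a0) (orient a0 a1 a3)
    (orient a1 a2 a0 + orient a2 a3 a0 + orient a3 a4 a0 + orient a4 a5 a0) = 0.
Proof.
case: a0 a1 a2 a3 a4 a5 => [x0 y0] [x1 y1] [x2 y2] [x3 y3] [x4 y4] [x5 y5].
by rewrite /hexagon_poly /orient /=; ring.
Qed.

Lemma hex_area_fan P :
  hex_area P = `|orient (hv P 1) (hv P 2) (hv P 0) + orient (hv P 2) (hv P 3) (hv P 0)
                + orient (hv P 3) (hv P 4) (hv P 0) + orient (hv P 4) (hv P 5) (hv P 0)| / 2.
Proof.
rewrite /hex_area !big_ord_recr big_ord0 /= add0r (_ : hv P 6 = hv P 0) //.
by congr (`|_| / 2); rewrite /orient; ring.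
Qed.

Lemma normr_sign {s x : R} : s = 1 \/ s = -1 -> 0 < s * x -> `|x| = s * x.
Proof.
case=> ->; first by rewrite !mul1r => /gtr0_norm.
by rewrite !mulN1r oppr_gt0 => /ltr0_norm.
Qed.

Lemma convex_hexagon_sign P : convex_hexagon P ->
  exists2 s : R, s = 1 \/ s = -1 &
    forall i j : nat, (i < 6)%N -> (j < 6)%N -> j != i -> j != (i.+1 %% 6)%N ->
      0 < s * orient (hv P i) (hv P i.+1) (hv P j).
Proof.
case=> convP; [exists 1; first by left | exists (-1); first by right].
  by move=> i j *; rewrite mul1r convP.
by move=> i j *; rewrite mulN1r oppr_gt0 convP.
Qed.

End Hexagon.

Theorem theorem3 (R : realFieldType) (P : 'I_6 -> R * R) :
  convex_hexagon P ->
  let A := hex_area P in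
  let v := vtri P in
  let p := tri_area (hv P 0) (hv P 1) (hv P 3) in
  (p - v 1%N) * A ^+ 2
  + (v 1%N * v 4%N + 2 * v 1%N * v 2%N + v 1%N * v 5%N - p ^+ 2 + v 1%N * p
     + v 0%N * v 1%N - v 2%N * p - v 3%N * p - v 5%N * p - v 4%N * p
     - v 0%N * v 2%N - v 0%N * p) * A
  - v 1%N * v 2%N * v 5%N - v 1%N * v 2%N * p - v 1%N * v 2%N * v 4%N
  - v 1%N * v 4%N * v 5%N - v 1%N * v 2%N ^+ 2 + v 2%N * v 3%N * p
  + v 3%N * p ^+ 2 - v 0%N * v 1%N * v 5%N
  + v 0%N * v 2%N ^+ 2 + v 4%N * v 5%N * p - v 0%N * v 1%N * v 2%N
  + v 0%N * v 2%N * v 5%N + v 0%N * p ^+ 2 - v 0%N * v 1%N * p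
  + 2 * v 0%N * v 2%N * p + v 0%N * v 5%N * p + v 3%N * v 4%N * p = 0.
Proof.
move=> /convex_hexagon_sign[s s_pm1 s_pos] A v p.
have areaE i j : (i < 6)%N -> (j < 6)%N -> j != i -> j != (i.+1 %% 6)%N ->
    tri_area (hv P i) (hv P i.+1) (hv P j) = s / 2 * orient (hv P i) (hv P i.+1) (hv P j).
  by move=> *; rewrite /tri_area (normr_sign s_pm1 (s_pos _ _ _ _ _ _)) // mulrAC.
have fan_pos : 0 < s * (orient (hv P 1) (hv P 2) (hv P 0) + orient (hv P 2) (hv P 3) (hv P 0)
                      + orient (hv P 3) (hv P 4) (hv P 0) + orient (hv P 4) (hv P 5) (hv P 0)).
  by rewrite 3!mulrDr !addr_gt0 ?s_pos.
suff: hexagon_poly (v 0%N) (v 1%N) (v 2%N) (v 3%N) (v 4%N) (v 5%N) p A = 0 by [].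
rewrite /A hex_area_fan (normr_sign s_pm1 fan_pos) mulrAC /v /p /vtri.
rewrite (areaE 5 1) // (areaE 0 2) // (areaE 1 3) // (areaE 2 4) // (areaE 3 5) //.
rewrite (areaE 4 0) // (areaE 0 3) //.
by rewrite hexagon_polyZ hexagon_poly_orient mulr0.
Qed.
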